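(* Let $(X,d)$ be a compact metric space with $\mathrm{diam}(X)\le1$. For $A\in\bar J(X)$ define $g_X(A)\colon C(X)\to\mathbb R$ by $g_X(A)(\varphi)=\sup\{\varphi(x)+\ln t\mid (x,t)\in A\}$ (with $\ln 0=-\infty$). Then $g_X(A)\in I(X)$ for each $A$, and $g_X\colon\bar J(X)\to I(X)$ is a homeomorphism.
   Context: A max-plus (idempotent) measure on a compact Hausdorff space $X$ is a functional $\mu\colon C(X)\to\mathbb R$ such that $\mu(c_X)=c$ for every constant $c\in\mathbb R$, $\mu(\varphi\vee\psi)=\mu(\varphi)\vee\mu(\psi)$, and $\mu(c_X+\varphi)=c+\mu(\varphi)$ for all $c\in\mathbb R$, $\varphi\in C(X)$. $I(X)$ is the set of max-plus measures with the topology of pointwise convergence on $C(X)$. $\mathrm{Cone}(X)=(X\times[0,1])/(X\times\{0\})$ with metric $\check d((x,s),(y,t))=\min\{s,t\}d(x,y)+|s-t|$; $\exp$ of a metric space is the space of nonempty compact subsets with the Hausdorff metric. A subset $K\subset\mathrm{Cone}(X)$ is saturated if $(x,t)\in K$ implies $(x,t')\in K$ for all $t'\in[0,t]$. $\bar J(X)=\{A\in\exp(\mathrm{Cone}(X))\mid A \text{ saturated and }(x,1)\in A\text{ for some }x\in X\}$. *)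

From Stdlib Require Import Reals Lra List ClassicalEpsilon.
Open Scope R_scope.

(** * Suprema / infima of sets of reals (literal sup; junk value 0 if
    the set is empty or unbounded above). *)
Definition Rsup (E : R -> Prop) : R :=
  match excluded_middle_informative (bound E /\ exists x, E x) with
  | left H => proj1_sig (completeness E (proj1 H) (proj2 H))
  | right _ => 0
  end.

Definition Rinf (E : R -> Prop) : R := - Rsup (fun y => E (- y)).

Record is_metric {X : Type} (d : X -> X -> R) : Prop := {
  metric_nonneg : forall x y, 0 <= d x y;
  metric_refl : forall x, d x x = 0;
  metric_sep : forall x y, d x y = 0 -> x = y;
  metric_sym : forall x y, d x y = d y x;
  metric_tri : forall x y z, d x z <= d x y + d y z
}.

Definition mopen {Y : Type} (D : Y -> Y -> R) (U : Y -> Prop) : Prop :=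
  forall p, U p -> exists r, 0 < r /\ forall q, D p q < r -> U q.

Definition mcompact_set {Y : Type} (D : Y -> Y -> R) (K : Y -> Prop) : Prop :=
  forall (I : Type) (U : I -> Y -> Prop),
    (forall i, mopen D (U i)) ->
    (forall p, K p -> exists i, U i p) ->
    exists l : list I, forall p, K p -> exists i, In i l /\ U i p.

Definition mcompact_space {X : Type} (d : X -> X -> R) : Prop :=
  mcompact_set d (fun _ => True).

Definition mcont {X : Type} (d : X -> X -> R) (f : X -> R) : Prop :=
  forall x eps, 0 < eps -> exists delta, 0 < delta /\
    forall y, d x y < delta -> Rabs (f x - f y) < eps.

Definition Cfun {X : Type} (d : X -> X -> R) : Type := { f : X -> R | mcont d f }.

Definition cval {X : Type} {d : X -> X -> R} (phi : Cfun d) : X -> R := proj1_sig phi.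

Definition is_maxplus {X : Type} (d : X -> X -> R) (mu : Cfun d -> R) : Prop :=
  (forall (c : R) (phi : Cfun d), (forall x, cval phi x = c) -> mu phi = c) /\
  (forall phi psi chi : Cfun d,
      (forall x, cval chi x = Rmax (cval phi x) (cval psi x)) ->
      mu chi = Rmax (mu phi) (mu psi)) /\
  (forall (c : R) (phi chi : Cfun d),
      (forall x, cval chi x = c + cval phi x) -> mu chi = c + mu phi).

(** topology of pointwise convergence on C(X), restricted to I(X):
    V is open iff every mu in V (and in I(X)) has a basic neighbourhood
    {nu | |nu(phi_i) - mu(phi_i)| < r, i = 1..n} (within I(X)) contained in V. *)
Definition openI {X : Type} (d : X -> X -> R) (V : (Cfun d -> R) -> Prop) : Prop :=
  forall mu, is_maxplus d mu -> V mu ->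
    exists (l : list (Cfun d)) (r : R), 0 < r /\
      forall nu, is_maxplus d nu ->
        (forall phi, In phi l -> Rabs (nu phi - mu phi) < r) -> V nu.

(** * The cone Cone(X) = (X x [0,1]) / (X x {0}).
    A point is represented by a pair (x,t) with 0 <= t <= 1; the cone metric
    below is a pseudometric on X x [0,1] vanishing exactly on pairs identified
    by the quotient (i.e. (x,0) ~ (y,0)).  Subsets of Cone(X) are represented
    by their preimages, i.e. subsets of X x [0,1] which are unions of classes. *)
Definition cone_dist {X : Type} (d : X -> X -> R) (p q : X * R) : R :=
  Rmin (snd p) (snd q) * d (fst p) (fst q) + Rabs (snd p - snd q).

Definition pt_set_dist {Y : Type} (D : Y -> Y -> R) (a : Y) (B : Y -> Prop) : R :=
  Rinf (fun r => exists b, B b /\ r = D a b).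

Definition hausdorff {Y : Type} (D : Y -> Y -> R) (A B : Y -> Prop) : R :=
  Rmax (Rsup (fun r => exists a, A a /\ r = pt_set_dist D a B))
       (Rsup (fun r => exists b, B b /\ r = pt_set_dist D b A)).

Definition Jbar {X : Type} (d : X -> X -> R) (A : X * R -> Prop) : Prop :=
  (forall x t, A (x, t) -> 0 <= t <= 1) /\
  (* A is a union of classes of the quotient (represents a subset of Cone X) *)
  (forall x y, A (x, 0) -> A (y, 0)) /\
  (exists p, A p) /\
  mcompact_set (cone_dist d) A /\
  (forall x t t', A (x, t) -> 0 <= t' <= t -> A (x, t')) /\
  (exists x, A (x, 1)).

Definition openJ {X : Type} (d : X -> X -> R) (U : (X * R -> Prop) -> Prop) : Prop :=
  forall A, Jbar d A -> U A ->
    exists r, 0 < r /\ forall B, Jbar d B -> hausdorff (cone_dist d) A B < r -> U B.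

(** g_X(A)(phi) = sup { phi(x) + ln t | (x,t) in A }   (ln 0 = -oo, so only
    t > 0 contributes) *)
Definition gX {X : Type} (d : X -> X -> R) (A : X * R -> Prop) (phi : Cfun d) : R :=
  Rsup (fun r => exists x t, A (x, t) /\ 0 < t /\ r = cval phi x + ln t).

(** homeomorphism between subspaces S0 (of S) and T0 (of T), with topologies
    given by "open" predicates (openness of a subset of S relative to S0). *)
Definition homeomorphism {S T : Type}
    (S0 : S -> Prop) (openS : (S -> Prop) -> Prop)
    (T0 : T -> Prop) (openT : (T -> Prop) -> Prop) (f : S -> T) : Prop :=
  (forall a, S0 a -> T0 (f a)) /\
  (forall a b, S0 a -> S0 b -> f a = f b -> a = b) /\
  (forall y, T0 y -> exists a, S0 a /\ f a = y) /\
  (forall V, openT V -> openS (fun a => V (f a))) /\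
  (forall U, openS U -> openT (fun y => exists a, S0 a /\ U a /\ f a = y)).

From Pilot Require Import Defs.
From Stdlib Require Import Reals Lra List ClassicalEpsilon Classical FunctionalExtensionality PropExtensionality.
Open Scope R_scope.

Lemma Rsup_spec (E : R -> Prop) : bound E -> (exists x, E x) -> is_lub E (Rsup E).
Proof.
  intros Hb Hne. unfold Rsup.
  destruct excluded_middle_informative as [H|H].
  - destruct (completeness E (proj1 H) (proj2 H)); assumption.
  - exfalso; tauto.
Qed.

Lemma Rsup_upper (E : R -> Prop) x : bound E -> E x -> x <= Rsup E.
Proof. intros Hb Hx. apply (Rsup_spec E Hb (ex_intro _ x Hx)); assumption. Qed.

Lemma Rsup_least (E : R -> Prop) M :
  (forall x, E x -> x <= M) -> (exists x, E x) -> Rsup E <= M.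
Proof.
  intros HM Hne. apply (Rsup_spec E (ex_intro _ M HM) Hne). exact HM.
Qed.

(** For a possibly empty set the junk value 0 is still below any nonnegative bound. *)
Lemma Rsup_least_nonneg (E : R -> Prop) M :
  (forall x, E x -> x <= M) -> 0 <= M -> Rsup E <= M.
Proof.
  intros HM HM0. destruct (classic (exists x, E x)) as [Hne|Hne].
  - apply Rsup_least; assumption.
  - unfold Rsup. destruct excluded_middle_informative as [H|H]; [exfalso; apply Hne, H | lra].
Qed.

Lemma Rsup_approx (E : R -> Prop) c :
  bound E -> (exists x, E x) -> c < Rsup E -> exists x, E x /\ c < x.
Proof.
  intros Hb Hne Hc. apply NNPP. intros Hno.
  assert (Rsup E <= c); [|lra].
  apply Rsup_least; [|assumption]. intros x Hx.
  apply Rnot_lt_le. intros Hcx. apply Hno. eauto.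
Qed.

Lemma Rinf_lower (S : R -> Prop) y :
  (exists m, forall z, S z -> m <= z) -> S y -> Rinf S <= y.
Proof.
  intros [m Hm] Hy. unfold Rinf.
  assert (- y <= Rsup (fun z => S (- z))); [|lra].
  apply Rsup_upper.
  - exists (- m). intros z Hz. specialize (Hm _ Hz). lra.
  - rewrite Ropp_involutive. exact Hy.
Qed.

Lemma Rinf_greatest (S : R -> Prop) m :
  (forall z, S z -> m <= z) -> (exists z, S z) -> m <= Rinf S.
Proof.
  intros Hm [z Hz]. unfold Rinf.
  assert (Rsup (fun y => S (- y)) <= - m); [|lra].
  apply Rsup_least.
  - intros y Hy. specialize (Hm _ Hy). lra.
  - exists (- z). rewrite Ropp_involutive. exact Hz.
Qed.

Lemma Rabs_le_bounds x y : Rabs x <= y -> - y <= x <= y.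
Proof. unfold Rabs; destruct Rcase_abs; lra. Qed.

Lemma ln_nonpos t : 0 < t <= 1 -> ln t <= 0.
Proof.
  intros Ht. rewrite <- ln_1. destruct (Req_dec t 1) as [->|Hne]; [lra|].
  left. apply ln_increasing; lra.
Qed.

Lemma ln_mono s t : 0 < s -> s <= t -> ln s <= ln t.
Proof.
  intros Hs Hst. destruct (Req_dec s t) as [->|Hne]; [lra|].
  left. apply ln_increasing; lra.
Qed.

(** Concavity of [ln] at [t]: the chord slope is at most [1/t]. *)
Lemma ln_sub_le s t : 0 < s -> 0 < t -> ln s - ln t <= (s - t) / t.
Proof.
  intros Hs Ht.
  assert (Hq : 0 < s / t) by (apply Rdiv_lt_0_compat; assumption).
  pose proof (exp_ineq1_le (ln (s / t))) as Hexp. rewrite exp_ln in Hexp by exact Hq.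
  unfold Rdiv in *. rewrite ln_mult, ln_Rinv in Hexp by (auto; apply Rinv_0_lt_compat; auto).
  replace ((s - t) * / t) with (s * / t - 1) by (field; lra). lra.
Qed.

Lemma ln_sub_bound a b c r :
  0 < c <= b -> 0 < a -> a - b <= r -> 0 <= r -> ln a - ln b <= r / c.
Proof.
  intros Hc Ha Hab Hr. pose proof (ln_sub_le a b Ha ltac:(lra)) as Hl.
  assert (Hrc : 0 <= r / c) by (unfold Rdiv; apply Rmult_le_pos; [lra | left; apply Rinv_0_lt_compat; lra]).
  destruct (Rle_lt_dec (a - b) 0) as [Hn|Hp].
  - assert ((a - b) / b <= 0); [|lra].
    assert (0 < / b) by (apply Rinv_0_lt_compat; lra). unfold Rdiv. nra.
  - assert ((a - b) / b <= r / c); [|lra].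
    unfold Rdiv. apply Rmult_le_compat; try lra.
    + left. apply Rinv_0_lt_compat; lra.
    + apply Rinv_le_contravar; lra.
Qed.

Lemma list_upper_bound {A} (f : A -> R) (l : list A) :
  exists M, 0 <= M /\ forall a, In a l -> f a <= M.
Proof.
  induction l as [|a l [M [HM Hl]]].
  - exists 0. split; [lra | intros a []].
  - exists (Rmax M (f a)). split; [eapply Rle_trans; [exact HM | apply Rmax_l]|].
    intros b [<-|Hb]; [apply Rmax_r|].
    eapply Rle_trans; [apply Hl; exact Hb | apply Rmax_l].
Qed.

Lemma list_pos_lower_bound {A} (P : A -> Prop) (f : A -> R) (l : list A) :
  (forall a, In a l -> P a -> 0 < f a) ->
  exists m, 0 < m /\ forall a, In a l -> P a -> m <= f a.
Proof.
  induction l as [|a l IH]; intros Hpos.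
  - exists 1. split; [lra | intros a []].
  - destruct IH as [m [Hm Hl]]; [intros; apply Hpos; simpl; auto|].
    destruct (classic (P a)) as [Pa|Pa].
    + exists (Rmin m (f a)). split; [apply Rmin_glb_lt; auto; apply Hpos; simpl; auto|].
      intros b [<-|Hb] Pb; [apply Rmin_r|].
      eapply Rle_trans; [apply Rmin_l | apply Hl; auto].
    + exists m. split; [exact Hm|]. intros b [<-|Hb] Pb; [contradiction | auto].
Qed.

Lemma interval_cover (rho : R -> R) :
  (forall s, 0 <= s <= 1 -> 0 < rho s) ->
  exists S, (forall s, In s S -> 0 <= s <= 1) /\
    forall z, 0 <= z <= 1 -> exists s, In s S /\ Rabs (z - s) < rho s.
Proof.
  intros Hr.
  set (U := fun s z => 0 <= s <= 1 /\ Rabs (z - s) < rho s).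
  assert (HU : forall s, (exists z, U s z) -> 0 <= s <= 1) by (intros s [z [Hs _]]; exact Hs).
  destruct (compact_P3 0 1 (mkfamily (fun s => 0 <= s <= 1) U HU)) as [D' [Hcov [l Hl]]].
  - split.
    + intros z Hz. exists z. split; [exact Hz|].
      replace (z - z) with 0 by ring. rewrite Rabs_R0. apply Hr; exact Hz.
    + intros s z [Hs Hz]. assert (Hp : 0 < rho s - Rabs (z - s)) by lra.
      exists (mkposreal _ Hp). intros y Hy. unfold disc in Hy; simpl in Hy. split; [exact Hs|].
      replace (y - s) with ((y - z) + (z - s)) by ring.
      pose proof (Rabs_triang (y - z) (z - s)). lra.
  - exists l. split.
    + intros s Hs. apply Hl in Hs. apply Hs.
    + intros z Hz. destruct (Hcov z Hz) as [s [[Hs Hzs] HD]].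
      exists s. split; [apply Hl; split|]; assumption.
Qed.

(** ** The cone metric

    It is a genuine pseudometric on levels [t >= 0]
    thanks to [diam X <= 1]; points with negative level only occur as
    junk points of the ambient type and are handled by [D_neg_ge]. *)

Section ConeMetric.
Variable X : Type.
Variable d : X -> X -> R.
Hypothesis Hm : is_metric d.
Hypothesis Hdiam : forall x y, d x y <= 1.
Notation D := (cone_dist d).

Lemma d_nonneg x y : 0 <= d x y. Proof. apply (metric_nonneg _ Hm). Qed.
Lemma d_sym x y : d x y = d y x. Proof. apply (metric_sym _ Hm). Qed.
Lemma d_self x : d x x = 0. Proof. apply (metric_refl _ Hm). Qed.
Lemma d_tri x y z : d x z <= d x y + d y z. Proof. apply (metric_tri _ Hm). Qed.

Lemma D_sym p q : D p q = D q p.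
Proof.
  destruct p as [x t], q as [y s]. unfold cone_dist; simpl.
  rewrite Rmin_comm, d_sym, Rabs_minus_sym. reflexivity.
Qed.

Lemma D_self p : D p p = 0.
Proof.
  destruct p as [x t]. unfold cone_dist; simpl.
  rewrite d_self, Rminus_diag, Rabs_R0. ring.
Qed.

Lemma D_level p q : 0 <= snd p -> 0 <= snd q -> Rabs (snd p - snd q) <= D p q.
Proof.
  destruct p as [x t], q as [y s]; unfold cone_dist; simpl; intros Ht Hs.
  assert (0 <= Rmin t s * d x y); [|lra].
  apply Rmult_le_pos; [apply Rmin_glb; assumption | apply d_nonneg].
Qed.

Lemma D_nonneg p q : 0 <= snd p -> 0 <= snd q -> 0 <= D p q.
Proof.
  intros Hp Hq. pose proof (D_level p q Hp Hq). pose proof (Rabs_pos (snd p - snd q)). lra.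
Qed.

Lemma D_below x t y s : 0 <= s <= t -> D (x, t) (y, s) = s * d x y + (t - s).
Proof.
  intros Hs. unfold cone_dist; simpl.
  rewrite Rmin_right, Rabs_right by lra. reflexivity.
Qed.

(** The whole base [X * {0}] is the apex of the cone. *)
Lemma D_to_base x t y : 0 <= t -> D (x, t) (y, 0) = t.
Proof. intros Ht. rewrite D_below by lra. ring. Qed.

Lemma D_tri p q r : 0 <= snd p -> 0 <= snd q -> 0 <= snd r -> D p r <= D p q + D q r.
Proof.
  destruct p as [x t], q as [y s], r as [z u]; unfold cone_dist; simpl; intros Ht Hs Hu.
  pose proof (d_tri x y z). pose proof (d_nonneg x y). pose proof (d_nonneg y z).
  pose proof (d_nonneg x z). pose proof (Hdiam x z).
  destruct (Rle_lt_dec (Rmin t u) s) as [Hle|Hlt].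
  - (* the middle point is not below both ends: compare term by term *)
    assert (Rmin t u <= Rmin t s) by (apply Rmin_glb; [apply Rmin_l | assumption]).
    assert (Rmin t u <= Rmin s u) by (apply Rmin_glb; [assumption | apply Rmin_r]).
    assert (0 <= Rmin t u) by (apply Rmin_glb; assumption).
    assert (Rmin t u * d x y <= Rmin t s * d x y) by (apply Rmult_le_compat_r; auto).
    assert (Rmin t u * d y z <= Rmin s u * d y z) by (apply Rmult_le_compat_r; auto).
    assert (Rmin t u * d x z <= Rmin t u * (d x y + d y z)) by (apply Rmult_le_compat_l; auto).
    assert (Rabs (t - u) <= Rabs (t - s) + Rabs (s - u)).
    { replace (t - u) with ((t - s) + (s - u)) by ring. apply Rabs_triang. }
    nra.
  - (* the middle point is strictly below both ends: use [d <= 1] *)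
    pose proof (Rmin_l t u). pose proof (Rmin_r t u).
    rewrite (Rmin_right t s), (Rmin_left s u) by lra.
    rewrite (Rabs_right (t - s)), (Rabs_left1 (s - u)) by lra.
    assert (s * d x z <= s * (d x y + d y z)) by (apply Rmult_le_compat_l; lra).
    destruct (Rle_dec t u).
    + rewrite Rmin_left, Rabs_left1 by lra.
      assert ((t - s) * d x z <= (t - s) * 1) by (apply Rmult_le_compat_l; lra). nra.
    + rewrite Rmin_right, Rabs_right by lra.
      assert ((u - s) * d x z <= (u - s) * 1) by (apply Rmult_le_compat_l; lra). nra.
Qed.

Lemma D_le_sum x t y s : 0 <= t <= 1 -> 0 <= s <= 1 -> D (x, t) (y, s) <= d x y + Rabs (t - s).
Proof.
  intros Ht Hs. unfold cone_dist; simpl.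
  assert (Rmin t s * d x y <= 1 * d x y); [|lra].
  apply Rmult_le_compat_r; [apply d_nonneg | pose proof (Rmin_l t s); lra].
Qed.

Lemma D_le_max x t y s : 0 <= t <= 1 -> 0 <= s <= 1 -> D (x, t) (y, s) <= Rmax t s.
Proof.
  intros Ht Hs. unfold cone_dist; simpl.
  assert (Rmin t s * d x y <= Rmin t s * 1).
  { apply Rmult_le_compat_l; [apply Rmin_glb; lra | apply Hdiam]. }
  unfold Rmin, Rmax in *; destruct Rle_dec;
    [rewrite Rabs_left1 | rewrite Rabs_right]; lra.
Qed.

Lemma D_neg_ge p q : 0 <= snd p -> snd q < 0 -> snd p <= D p q.
Proof.
  destruct p as [x t], q as [y s]; unfold cone_dist; simpl; intros Ht Hs.
  rewrite Rmin_right, Rabs_right by lra.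
  pose proof (Hdiam x y).
  assert (s * 1 <= s * d x y) by (apply Rmult_le_compat_neg_l; lra). lra.
Qed.

Lemma D_eq0 x t y s : 0 < t -> 0 <= s -> D (x, t) (y, s) = 0 -> x = y /\ s = t.
Proof.
  intros Ht Hs H0. pose proof (D_level (x, t) (y, s) ltac:(simpl; lra) Hs) as Hl.
  simpl in Hl. rewrite H0 in Hl. apply Rabs_le_bounds in Hl.
  assert (s = t) by lra. subst s. split; [|reflexivity].
  apply (metric_sep _ Hm). rewrite D_below in H0 by lra.
  pose proof (d_nonneg x y). nra.
Qed.

Lemma D_near x t y s r :
  0 < t -> 0 <= s -> D (x, t) (y, s) < r -> r <= t / 2 ->
  t / 2 < s /\ Rabs (t - s) < r /\ t * d x y < 2 * r.
Proof.
  intros Ht Hs Hd Hr.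
  pose proof (D_level (x, t) (y, s) ltac:(simpl; lra) Hs) as Hl; simpl in Hl.
  pose proof Hl as Hlb. apply Rabs_le_bounds in Hlb.
  assert (Hts : t / 2 < s) by lra.
  split; [exact Hts | split; [lra|]].
  unfold cone_dist in Hd; simpl in Hd.
  assert (t / 2 <= Rmin t s) by (apply Rmin_glb; lra).
  assert (t / 2 * d x y <= Rmin t s * d x y) by (apply Rmult_le_compat_r; [apply d_nonneg | lra]).
  pose proof (Rabs_pos (t - s)). lra.
Qed.

(** [mopen D] is openness in the ambient type [X * R]; the following
    criteria only require checking balls around points of nonnegative level. *)

Lemma open_pos (W : X * R -> Prop) :
  (forall q, W q -> 0 < snd q /\ exists r, 0 < r /\
      forall q', 0 <= snd q' -> D q q' < r -> W q') -> mopen D W.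
Proof.
  intros H q Hq. destruct (H q Hq) as [Hp [r [Hr Hw]]].
  exists (Rmin r (snd q)). split; [apply Rmin_glb_lt; assumption|].
  intros q' Hq'. pose proof (Rmin_l r (snd q)). pose proof (Rmin_r r (snd q)).
  destruct (Rle_lt_dec 0 (snd q')) as [Hq0|Hq0].
  - apply Hw; [exact Hq0 | lra].
  - pose proof (D_neg_ge q q' ltac:(lra) Hq0). lra.
Qed.

Lemma open_union (W1 W2 : X * R -> Prop) :
  mopen D W1 -> mopen D W2 -> mopen D (fun q => W1 q \/ W2 q).
Proof.
  intros H1 H2 q [Hq|Hq]; [destruct (H1 q Hq) as [r [Hr Hw]] | destruct (H2 q Hq) as [r [Hr Hw]]];
    exists r; split; auto.
Qed.

Lemma open_lowstrip c : 0 < c -> mopen D (fun q => snd q < c).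
Proof.
  intros Hc q Hq. destruct (Rle_lt_dec 0 (snd q)) as [H0|H0].
  - exists (c - snd q). split; [lra|]. intros q' Hq'.
    destruct (Rle_lt_dec 0 (snd q')) as [H1|H1]; [|lra].
    pose proof (D_level q q' H0 H1) as Hl. apply Rabs_le_bounds in Hl. lra.
  - exists c. split; [exact Hc|]. intros q' Hq'.
    destruct (Rle_lt_dec 0 (snd q')) as [H1|H1]; [|lra].
    rewrite D_sym in Hq'. pose proof (D_neg_ge q' q H1 H0). lra.
Qed.

Lemma open_ball_pos (p : X * R) r : 0 <= snd p -> mopen D (fun q => 0 < snd q /\ D p q < r).
Proof.
  intros Hp. apply open_pos. intros q [Hq1 Hq2]. split; [exact Hq1|].
  exists (Rmin (r - D p q) (snd q)). split; [apply Rmin_glb_lt; lra|].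
  intros q' Hq' Hqq. pose proof (Rmin_l (r - D p q) (snd q)). pose proof (Rmin_r (r - D p q) (snd q)).
  pose proof (D_level q q' ltac:(lra) Hq') as Hl. apply Rabs_le_bounds in Hl.
  pose proof (D_tri p q q' Hp ltac:(lra) Hq'). split; lra.
Qed.

Lemma open_far_pos (p : X * R) r : 0 <= snd p -> mopen D (fun q => 0 < snd q /\ r < D p q).
Proof.
  intros Hp. apply open_pos. intros q [Hq1 Hq2]. split; [exact Hq1|].
  exists (Rmin (D p q - r) (snd q)). split; [apply Rmin_glb_lt; lra|].
  intros q' Hq' Hqq. pose proof (Rmin_l (D p q - r) (snd q)). pose proof (Rmin_r (D p q - r) (snd q)).
  pose proof (D_level q q' ltac:(lra) Hq') as Hl. apply Rabs_le_bounds in Hl.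
  pose proof (D_tri p q' q Hp Hq' ltac:(lra)). rewrite (D_sym q' q) in *. split; lra.
Qed.

Lemma open_far_set (K : X * R -> Prop) : (forall k, K k -> 0 <= snd k) ->
  mopen D (fun q => 0 < snd q /\ exists r, 0 < r /\ forall k, K k -> r <= D q k).
Proof.
  intros HK. apply open_pos. intros q [Hq [r [Hr Hk]]]. split; [exact Hq|].
  exists (Rmin (r / 2) (snd q)). split; [apply Rmin_glb_lt; lra|].
  intros q' Hq' Hqq. pose proof (Rmin_l (r / 2) (snd q)). pose proof (Rmin_r (r / 2) (snd q)).
  pose proof (D_level q q' ltac:(lra) Hq') as Hl. apply Rabs_le_bounds in Hl.
  split; [lra|]. exists (r / 2). split; [lra|]. intros k Hk'.
  pose proof (D_tri q q' k ltac:(lra) Hq' (HK k Hk')). pose proof (Hk k Hk'). lra.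
Qed.


(** The basic estimate behind every continuity statement: if [(y,s)] is
    cone-close to [(x,t)] with [t >= c > 0] and [f] is [eps/2]-continuous at
    [x] with modulus [del], then [f y + ln s] is at least [f x + ln t - eps].
    The admissible closeness radius depends only on [c], [eps], [del]. *)

Definition shift_radius (c eps del : R) : R := Rmin (c / 2) (Rmin (c * del / 2) (eps * c / 4)).

Lemma shift_radius_pos c eps del : 0 < c -> 0 < eps -> 0 < del -> 0 < shift_radius c eps del.
Proof.
  intros Hc He Hd. unfold shift_radius.
  repeat apply Rmin_glb_lt; apply Rmult_lt_0_compat; try lra; apply Rmult_lt_0_compat; lra.
Qed.

Lemma log_shift (f : X -> R) x t y s c eps del :
  0 < c <= t -> 0 < eps -> 0 < del -> 0 <= s ->
  (forall z, d x z < del -> Rabs (f x - f z) < eps / 2) ->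
  D (x, t) (y, s) < shift_radius c eps del ->
  0 < s /\ f x + ln t < f y + ln s + eps.
Proof.
  intros Hc He Hdel Hs Hf Hd. set (r := shift_radius c eps del) in *.
  assert (Hr1 : r <= c / 2) by apply Rmin_l.
  assert (Hr2 : r <= c * del / 2) by (eapply Rle_trans; [apply Rmin_r | apply Rmin_l]).
  assert (Hr3 : r <= eps * c / 4) by (eapply Rle_trans; [apply Rmin_r | apply Rmin_r]).
  assert (Hr0 : 0 <= r) by (pose proof (D_nonneg (x, t) (y, s) ltac:(simpl; lra) Hs); lra).
  destruct (D_near x t y s r ltac:(lra) Hs Hd ltac:(lra)) as [Hts [Hlev Hxy]].
  apply Rabs_def2 in Hlev.
  assert (Hdxy : d x y < del) by nra.
  specialize (Hf y Hdxy). apply Rabs_def2 in Hf.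
  pose proof (ln_sub_bound t s (t / 2) r ltac:(lra) ltac:(lra) ltac:(lra) Hr0) as Hln.
  assert (Hq : r / (t / 2) * (t / 2) = r) by (field; lra).
  assert (r / (t / 2) <= eps / 2) by nra.
  split; lra.
Qed.

End ConeMetric.

(** ** Compactness of [X] and of its cone *)

Section Compactness.
Variable X : Type.
Variable d : X -> X -> R.
Hypothesis Hm : is_metric d.
Hypothesis Hcompact : mcompact_space d.
Hypothesis Hdiam : forall x y, d x y <= 1.
Notation D := (cone_dist d).
Notation Lev := (fun q : X * R => 0 <= snd q <= 1).

Lemma cont_bounded (f : X -> R) : mcont d f -> exists M, 0 <= M /\ forall x, Rabs (f x) <= M.
Proof.
  intros Hf.
  destruct (Hcompact nat (fun n y => Rabs (f y) < INR n)) as [l Hl].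
  - intros n y Hy. destruct (Hf y (INR n - Rabs (f y))) as [del [Hd Hdel]]; [lra|].
    exists del. split; [exact Hd|]. intros q Hq. specialize (Hdel q Hq).
    pose proof (Rabs_triang_inv (f q) (f y)). rewrite Rabs_minus_sym in Hdel. lra.
  - intros y _. destruct (INR_unbounded (Rabs (f y))) as [n Hn]. exists n. lra.
  - destruct (list_upper_bound INR l) as [M [HM HMl]]. exists M. split; [exact HM|].
    intros x. destruct (Hl x I) as [n [Hn Hx]]. specialize (HMl n Hn). lra.
Qed.

Lemma unif_cont (f : X -> R) : mcont d f -> forall eps, 0 < eps ->
  exists del, 0 < del /\ forall y z, d y z < del -> Rabs (f y - f z) < eps.
Proof.
  intros Hf eps He.
  (* cover [X] by balls of half the continuity radius of [f] at their centres *)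
  destruct (Hcompact (X * R)%type (fun p y => 0 < snd p /\
     (forall z, d (fst p) z < snd p -> Rabs (f (fst p) - f z) < eps / 2) /\
     d (fst p) y < snd p / 2)) as [l Hl].
  - intros [x r] y [H1 [H2 H3]]. simpl in *. exists (r / 2 - d x y). split; [lra|].
    intros q Hq. pose proof (d_tri X d Hm x y q). simpl. repeat split; auto; lra.
  - intros y _. destruct (Hf y (eps / 2)) as [del [Hd Hdel]]; [lra|].
    exists (y, del). simpl. rewrite (d_self X d Hm). repeat split; auto; lra.
  - destruct (list_pos_lower_bound (fun p => 0 < snd p) (fun p => snd p / 2) l) as [m [Hm0 Hml]].
    { intros a _ Ha. lra. }
    exists m. split; [exact Hm0|]. intros y z Hyz.
    destruct (Hl y I) as [[x r] [Hin [H1 [H2 H3]]]]. simpl in *.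
    specialize (Hml _ Hin H1). simpl in Hml.
    pose proof (d_tri X d Hm x y z).
    pose proof (H2 y ltac:(lra)) as Hy. pose proof (H2 z ltac:(lra)) as Hz.
    replace (f y - f z) with (- (f x - f y) + (f x - f z)) by ring.
    pose proof (Rabs_triang (- (f x - f y)) (f x - f z)) as HT. rewrite Rabs_Ropp in HT. lra.
Qed.

Lemma tube_cover (Ix : Type) (U : Ix -> X * R -> Prop) s :
  (forall i, mopen D (U i)) -> 0 <= s <= 1 -> (forall x, exists i, U i (x, s)) ->
  exists w l, 0 < w /\
    forall y u, 0 <= u <= 1 -> Rabs (u - s) < w -> exists i, In i l /\ U i (y, u).
Proof.
  intros HU Hs Hcov.
  destruct (Hcompact (X * R * Ix)%type (fun p y => 0 < snd (fst p) /\
     (forall q, D (fst (fst p), s) q < snd (fst p) -> U (snd p) q) /\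
     d (fst (fst p)) y < snd (fst p) / 2)) as [l Hl].
  - intros [[x r] i] y [H1 [H2 H3]]. simpl in *. exists (r / 2 - d x y). split; [lra|].
    intros q Hq. pose proof (d_tri X d Hm x y q). simpl. repeat split; auto; lra.
  - intros y _. destruct (Hcov y) as [i Hi]. destruct (HU i _ Hi) as [r [Hr Hri]].
    exists (y, r, i). simpl. rewrite (d_self X d Hm). repeat split; auto; lra.
  - destruct (list_pos_lower_bound (fun p => 0 < snd (fst p)) (fun p => snd (fst p) / 2) l)
      as [m [Hm0 Hml]].
    { intros a _ Ha. lra. }
    exists m, (map snd l). split; [exact Hm0|]. intros y u Hu Hus.
    destruct (Hl y I) as [[[x r] i] [Hin [H1 [H2 H3]]]]. simpl in *.
    specialize (Hml _ Hin H1). simpl in Hml. exists i. split.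
    + apply in_map_iff. exists (x, r, i). auto.
    + apply H2. pose proof (D_le_sum X d Hm x s y u Hs Hu).
      rewrite Rabs_minus_sym in Hus. lra.
Qed.

Lemma cone_compact : mcompact_set D Lev.
Proof.
  intros Ix U HU Hcov.
  set (tube := fun s (p : R * list Ix) => 0 < fst p /\
     forall y u, 0 <= u <= 1 -> Rabs (u - s) < fst p -> exists i, In i (snd p) /\ U i (y, u)).
  set (ch := fun s => epsilon (inhabits (1, @nil Ix)) (tube s)).
  assert (Hch : forall s, 0 <= s <= 1 -> tube s (ch s)).
  { intros s Hs. apply epsilon_spec.
    destruct (tube_cover Ix U s HU Hs) as [w [l Hwl]]; [intros x; apply (Hcov (x, s) Hs)|].
    exists (w, l). exact Hwl. }
  destruct (interval_cover (fun s => fst (ch s))) as [S [HS1 HS2]].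
  { intros s Hs. apply (Hch s Hs). }
  exists (flat_map (fun s => snd (ch s)) S). intros [y u] Hu. simpl in Hu.
  destruct (HS2 u Hu) as [s [Hs Hus]].
  destruct (proj2 (Hch s (HS1 s Hs)) y u Hu Hus) as [i [Hi Hui]].
  exists i. split; [apply in_flat_map; exists s; auto | exact Hui].
Qed.

Lemma closed_cone_compact (K : X * R -> Prop) :
  (forall q, K q -> Lev q) ->
  (forall p, Lev p -> ~ K p -> exists r, 0 < r /\ forall k, K k -> r <= D p k) ->
  mcompact_set D K.
Proof.
  intros HKL Hcl Ix U HU Hcov.
  set (far := fun q : X * R => 0 < snd q /\ exists r, 0 < r /\ forall k, K k -> r <= D q k).
  set (low := fun q : X * R => exists c, 0 < c /\ (forall k, K k -> c <= snd k) /\ snd q < c).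
  set (V := fun (o : option Ix) q => match o with Some i => U i q | None => far q \/ low q end).
  destruct (cone_compact (option Ix) V) as [L HL].
  - intros [i|]; [apply HU|]. apply open_union.
    + apply (open_far_set X d Hm Hdiam). intros k Hk. apply HKL, Hk.
    + intros q [c [Hc [Hck Hq]]]. destruct (open_lowstrip X d Hm Hdiam c Hc q Hq) as [r [Hr Hball]].
      exists r. split; [exact Hr|]. intros q' Hq'. exists c. auto.
  - intros p Hp. destruct (classic (K p)) as [Kp|Kp].
    + destruct (Hcov p Kp) as [i Hi]. exists (Some i). exact Hi.
    + exists None. simpl. destruct (Hcl p Hp Kp) as [r [Hr Hfar]].
      destruct (Rlt_or_le 0 (snd p)) as [Hpos|Hzero].
      * left. split; [exact Hpos|]. exists r. auto.
      * (* [p] lies on the base, so [K] avoids the levels below [r] *)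
        right. exists r. split; [exact Hr|]. split; [|lra].
        intros [y s] Hk. specialize (Hfar _ Hk). destruct p as [x t]; simpl in *.
        replace t with 0 in Hfar by lra.
        rewrite (D_sym X d Hm), (D_to_base X d) in Hfar by (apply (HKL _ Hk)). exact Hfar.
  - exists (flat_map (fun o => match o with Some i => i :: nil | None => nil end) L).
    intros k Hk. destruct (HL k (HKL k Hk)) as [[i|] [Ho Hko]].
    + exists i. split; [apply in_flat_map; exists (Some i); simpl; auto | exact Hko].
    + exfalso. destruct Hko as [[_ [r [Hr Hkk]]]|[c [_ [Hck Hlt]]]].
      * specialize (Hkk k Hk). rewrite (D_self X d Hm) in Hkk. lra.
      * specialize (Hck k Hk). lra.
Qed.

Lemma cone_net (K : X * R -> Prop) r :
  mcompact_set D K -> (forall q, K q -> Lev q) -> 0 < r ->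
  exists l, (forall p, In p l -> K p) /\ forall k, K k -> exists p, In p l /\ D p k < r.
Proof.
  intros HK HKL Hr.
  set (U := fun (o : option {p | K p}) q => match o with
     | Some p => 0 < snd q /\ D (proj1_sig p) q < r
     | None => snd q < r / 2 end).
  destruct (HK _ U) as [L HL].
  - intros [[p Kp]|]; simpl.
    + apply (open_ball_pos X d Hm Hdiam). apply (HKL p Kp).
    + apply (open_lowstrip X d Hm Hdiam). lra.
  - intros k Hk. destruct (Rlt_or_le 0 (snd k)) as [Hpos|Hzero].
    + exists (Some (exist _ k Hk)). simpl. rewrite (D_self X d Hm). auto.
    + exists None. simpl. pose proof (HKL k Hk). lra.
  - set (centers := flat_map (fun o => match o with
       | Some p => proj1_sig p :: nil | None => nil end) L).
    assert (Hcent : forall p, In p centers -> K p).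
    { intros p Hp. apply in_flat_map in Hp as [[[p' Kp']|] [_ Hin]]; simpl in Hin;
        [destruct Hin as [<-|[]]; exact Kp' | destruct Hin]. }
    assert (Hnear : forall k, K k -> (exists p, In p centers /\ D p k < r) \/ snd k < r / 2).
    { intros k Hk. destruct (HL k Hk) as [[[p Kp]|] [Ho Hko]]; simpl in Hko; [left|right; exact Hko].
      exists p. split; [apply in_flat_map; exists (Some (exist _ p Kp)); simpl; auto | tauto]. }
    destruct (classic (exists k0, K k0 /\ snd k0 < r / 2)) as [[k0 [Hk0 Hlow]]|Hnolow].
    + (* one extra centre of low level covers the neighbourhood of the apex *)
      exists (k0 :: centers). split; [intros p [<-|Hp]; auto|].
      intros k Hk. destruct (Hnear k Hk) as [[p [Hp Hpk]]|Hkl]; [exists p; simpl; auto|].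
      exists k0. split; [left; reflexivity|].
      pose proof (HKL _ Hk0) as L0. pose proof (HKL _ Hk) as L1.
      destruct k0 as [x0 t0], k as [y s]; simpl in *.
      pose proof (D_le_max X d Hdiam x0 t0 y s L0 L1). unfold Rmax in *. destruct Rle_dec; lra.
    + exists centers. split; [exact Hcent|]. intros k Hk.
      destruct (Hnear k Hk) as [Hc|Hkl]; [exact Hc|]. exfalso. apply Hnolow. eauto.
Qed.

Lemma dist_compact_pos (K : X * R -> Prop) p :
  mcompact_set D K -> (forall q, K q -> Lev q) -> 0 < snd p ->
  (forall k, K k -> 0 < D p k) -> exists rho, 0 < rho /\ forall k, K k -> rho <= D p k.
Proof.
  intros HK HKL Hp Hpos.
  set (U := fun (o : option nat) q => match o with
     | Some n => 0 < snd q /\ / (INR n + 1) < D p q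
     | None => snd q < snd p / 2 end).
  set (radius := fun (o : option nat) => match o with
     | Some n => / (INR n + 1) | None => snd p / 2 end).
  destruct (HK _ U) as [L HL].
  - intros [n|]; simpl.
    + apply (open_far_pos X d Hm Hdiam). lra.
    + apply (open_lowstrip X d Hm Hdiam). lra.
  - intros k Hk. destruct (Rlt_or_le (snd k) (snd p / 2)) as [Hlow|Hhigh].
    + exists None. exact Hlow.
    + specialize (Hpos k Hk). destruct (INR_unbounded (/ D p k)) as [n Hn].
      exists (Some n). simpl. split; [lra|].
      pose proof (pos_INR n). assert (Hi : 0 < / D p k) by (apply Rinv_0_lt_compat; exact Hpos).
      rewrite <- (Rinv_inv (D p k)). apply Rinv_lt_contravar; [apply Rmult_lt_0_compat|]; lra.
  - destruct (list_pos_lower_bound (fun _ => True) radius L) as [m [Hm0 Hml]].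
    { intros [n|] _ _; simpl; [apply Rinv_0_lt_compat; pose proof (pos_INR n)|]; lra. }
    exists m. split; [exact Hm0|]. intros k Hk.
    destruct (HL k Hk) as [o [Ho Hko]]. specialize (Hml o Ho I).
    destruct o as [n|]; simpl in Hml, Hko; [lra|].
    pose proof (D_level X d Hm p k ltac:(lra) (proj1 (HKL k Hk))) as Hl.
    apply Rabs_le_bounds in Hl. lra.
Qed.

End Compactness.

Section ContinuousFunctions.
Variable X : Type.
Variable d : X -> X -> R.
Hypothesis Hm : is_metric d.

Lemma mcont_const c : mcont d (fun _ => c).
Proof.
  intros x e He. exists 1. split; [lra|]. intros y _.
  rewrite Rminus_diag, Rabs_R0. exact He.
Qed.

Lemma mcont_shift (f : X -> R) c : mcont d f -> mcont d (fun y => c + f y).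
Proof.
  intros Hf x e He. destruct (Hf x e He) as [del [Hd Hdel]].
  exists del. split; [exact Hd|]. intros y Hy.
  replace (c + f x - (c + f y)) with (f x - f y) by ring. auto.
Qed.

Lemma mcont_max (f g : X -> R) : mcont d f -> mcont d g -> mcont d (fun y => Rmax (f y) (g y)).
Proof.
  intros Hf Hg x e He. destruct (Hf x e He) as [d1 [Hd1 H1]]. destruct (Hg x e He) as [d2 [Hd2 H2]].
  exists (Rmin d1 d2). split; [apply Rmin_glb_lt; assumption|]. intros y Hy.
  pose proof (Rmin_l d1 d2). pose proof (Rmin_r d1 d2).
  specialize (H1 y ltac:(lra)). specialize (H2 y ltac:(lra)).
  apply Rabs_def2 in H1. apply Rabs_def2 in H2. apply Rabs_def1; unfold Rmax; repeat destruct Rle_dec; lra.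
Qed.

Lemma mcont_bump x K : mcont d (fun y => - K * d x y).
Proof.
  intros y e He. exists (e / (Rabs K + 1)).
  pose proof (Rabs_pos K) as HK.
  split; [apply Rdiv_lt_0_compat; lra|]. intros z Hz.
  assert (Hdz : Rabs (d x y - d x z) <= d y z).
  { pose proof (d_tri X d Hm x y z). pose proof (d_tri X d Hm x z y).
    rewrite (d_sym X d Hm z y) in *. apply Rabs_le. lra. }
  replace (- K * d x y - - K * d x z) with (- K * (d x y - d x z)) by ring.
  rewrite Rabs_mult, Rabs_Ropp.
  assert (Hq : e / (Rabs K + 1) * (Rabs K + 1) = e) by (field; lra).
  pose proof (Rabs_pos (d x y - d x z)). nra.
Qed.

Definition cconst (c : R) : Cfun d := exist _ (fun _ => c) (mcont_const c).

Definition cshift (c : R) (f : Cfun d) : Cfun d :=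
  exist _ (fun y => c + cval f y) (mcont_shift (cval f) c (proj2_sig f)).

Definition cmax (f g : Cfun d) : Cfun d :=
  exist _ (fun y => Rmax (cval f y) (cval g y)) (mcont_max _ _ (proj2_sig f) (proj2_sig g)).

(** The "bump" [- K d(x, .)]: a steep cone with vertex [x], used to probe
    the points of [A] near [x]. *)
Definition cbump (x : X) (K : R) : Cfun d := exist _ (fun y => - K * d x y) (mcont_bump x K).

Lemma open_lt_cfun (f g : Cfun d) : mopen d (fun y => cval f y < cval g y).
Proof.
  intros y Hy; cbv beta in *. set (gap := (cval g y - cval f y) / 2).
  destruct (proj2_sig f y gap) as [d1 [Hd1 H1]]; [unfold gap; lra|].
  destruct (proj2_sig g y gap) as [d2 [Hd2 H2]]; [unfold gap; lra|].
  exists (Rmin d1 d2). split; [apply Rmin_glb_lt; assumption|]. intros z Hz.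
  pose proof (Rmin_l d1 d2). pose proof (Rmin_r d1 d2).
  specialize (H1 z ltac:(lra)). specialize (H2 z ltac:(lra)).
  apply Rabs_def2 in H1. apply Rabs_def2 in H2. cbv beta. unfold gap, cval in *. lra.
Qed.

End ContinuousFunctions.

(** ** The map [g_X] and its values *)

Section GX.
Variable X : Type.
Variable d : X -> X -> R.
Hypothesis Hm : is_metric d.
Hypothesis Hcompact : mcompact_space d.
Notation D := (cone_dist d).

Lemma Jbar_level A q : Jbar d A -> A q -> 0 <= snd q <= 1.
Proof. intros [H _] Hq. destruct q as [x t]. exact (H x t Hq). Qed.

Lemma Jbar_base A y : Jbar d A -> A (y, 0).
Proof.
  intros (_ & Hbase & _ & _ & Hsat & [x1 Hx1]).
  apply (Hbase x1). apply (Hsat x1 1); [exact Hx1 | lra].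
Qed.

Lemma cfun_bounded (phi : Cfun d) : exists M, 0 <= M /\ forall x, Rabs (cval phi x) <= M.
Proof. apply (cont_bounded X d Hcompact). apply (proj2_sig phi). Qed.

Definition gX_set (A : X * R -> Prop) (phi : Cfun d) : R -> Prop :=
  fun r => exists x t, A (x, t) /\ 0 < t /\ r = cval phi x + ln t.

Lemma gX_set_bound A phi : Jbar d A -> bound (gX_set A phi).
Proof.
  intros HA. destruct (cfun_bounded phi) as [M [HM HMx]]. exists M.
  intros r [x [t [Hx [Ht ->]]]]. pose proof (Jbar_level A _ HA Hx) as Hl; simpl in Hl.
  pose proof (ln_nonpos t ltac:(lra)). pose proof (Rabs_le_bounds _ _ (HMx x)). lra.
Qed.

Lemma gX_set_nonempty A phi : Jbar d A -> exists r, gX_set A phi r.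
Proof.
  intros (_ & _ & _ & _ & _ & [x1 Hx1]).
  exists (cval phi x1 + ln 1), x1, 1. repeat split; auto; lra.
Qed.

Lemma gX_upper A phi x t : Jbar d A -> A (x, t) -> 0 < t -> cval phi x + ln t <= gX d A phi.
Proof. intros HA Hx Ht. apply Rsup_upper; [apply gX_set_bound; exact HA | exists x, t; auto]. Qed.

Lemma gX_least A phi c : Jbar d A ->
  (forall x t, A (x, t) -> 0 < t -> cval phi x + ln t <= c) -> gX d A phi <= c.
Proof.
  intros HA H. apply Rsup_least; [|apply gX_set_nonempty; exact HA].
  intros r [x [t [Hx [Ht ->]]]]. auto.
Qed.

Lemma gX_approx A phi c : Jbar d A -> c < gX d A phi ->
  exists x t, A (x, t) /\ 0 < t /\ c < cval phi x + ln t.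
Proof.
  intros HA Hc.
  destruct (Rsup_approx (gX_set A phi) c (gX_set_bound A phi HA) (gX_set_nonempty A phi HA) Hc)
    as [r [[x [t [Hx [Ht ->]]]] Hr]].
  eauto.
Qed.

Lemma gX_maxplus A : Jbar d A -> is_maxplus d (gX d A).
Proof.
  intros HA. pose proof HA as (_ & _ & _ & _ & _ & [x1 Hx1]).
  split; [|split].
  - intros c phi Hc. apply Rle_antisym.
    + apply gX_least; [exact HA|]. intros x t Hx Ht. rewrite Hc.
      pose proof (Jbar_level A _ HA Hx). pose proof (ln_nonpos t). simpl in *. lra.
    + pose proof (gX_upper A phi x1 1 HA Hx1 ltac:(lra)). rewrite Hc, ln_1 in H. lra.
  - intros phi psi chi Hc. apply Rle_antisym.
    + apply gX_least; [exact HA|]. intros x t Hx Ht. rewrite Hc.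
      pose proof (gX_upper A phi x t HA Hx Ht). pose proof (gX_upper A psi x t HA Hx Ht).
      unfold Rmax; repeat destruct Rle_dec; lra.
    + apply Rmax_lub; apply gX_least; try exact HA; intros x t Hx Ht;
        pose proof (gX_upper A chi x t HA Hx Ht) as Hchi; rewrite Hc in Hchi.
      * pose proof (Rmax_l (cval phi x) (cval psi x)). lra.
      * pose proof (Rmax_r (cval phi x) (cval psi x)). lra.
  - intros c phi chi Hc. apply Rle_antisym.
    + apply gX_least; [exact HA|]. intros x t Hx Ht. rewrite Hc.
      pose proof (gX_upper A phi x t HA Hx Ht). lra.
    + assert (gX d A phi <= gX d A chi - c); [|lra].
      apply gX_least; [exact HA|]. intros x t Hx Ht.
      pose proof (gX_upper A chi x t HA Hx Ht). rewrite Hc in H. lra.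
Qed.

Lemma gX_bump_ge A x t K : Jbar d A -> A (x, t) -> 0 < t -> ln t <= gX d A (cbump X d Hm x K).
Proof.
  intros HA Hx Ht. pose proof (gX_upper A (cbump X d Hm x K) x t HA Hx Ht) as H.
  unfold cval in H; simpl in H. rewrite (d_self X d Hm) in H. lra.
Qed.

(** If [A] stays at cone distance [>= r] from [(x, t)], a steep enough bump
    at [x] sees strictly less than [ln t]: points of [A] near [x] in [X]
    must lie at least [r/2] below level [t] (by saturation), the others are
    flattened by the slope [K]. *)
Lemma gX_bump_far A x t r K :
  Jbar d A -> 0 < t <= 1 -> 0 < r <= t -> 0 <= K -> - ln (t - r / 2) <= K * (r / 2) ->
  (forall a, A a -> r <= D (x, t) a) -> gX d A (cbump X d Hm x K) <= ln (t - r / 2).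
Proof.
  intros HA Ht Hr HK HKr Hfar. pose proof HA as (_ & _ & _ & _ & Hsat & _).
  apply gX_least; [exact HA|]. intros y s Hy Hs. unfold cval; simpl.
  pose proof (Jbar_level A _ HA Hy) as Hs1; simpl in Hs1.
  pose proof (d_nonneg X d Hm x y) as Hd0.
  destruct (Rle_lt_dec (r / 2) (d x y)) as [Hd|Hd].
  - assert (K * (r / 2) <= K * d x y) by (apply Rmult_le_compat_l; assumption).
    pose proof (ln_nonpos s ltac:(lra)). lra.
  - assert (Hst : s < t).
    { apply Rnot_le_lt. intros Hts.
      specialize (Hfar (y, t) (Hsat y s t Hy ltac:(lra))).
      rewrite (D_below X d) in Hfar by lra.
      assert (t * d x y <= 1 * d x y) by (apply Rmult_le_compat_r; lra). lra. }
    specialize (Hfar (y, s) Hy). rewrite (D_below X d) in Hfar by lra.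
    assert (s * d x y <= 1 * d x y) by (apply Rmult_le_compat_r; lra).
    pose proof (ln_mono s (t - r / 2) Hs ltac:(lra)).
    assert (0 <= K * d x y) by (apply Rmult_le_pos; assumption). lra.
Qed.

End GX.

(** ** Injectivity of [g_X]

    A point [(x,t)] of [A] outside [B] is at positive distance [r] from the
    compact set [B]; the bump at [x] of slope about [-ln t / r] then
    separates [g_X(A)] from [g_X(B)] ([gX_bump_ge] versus [gX_bump_far]). *)

Section Injectivity.
Variable X : Type.
Variable d : X -> X -> R.
Hypothesis Hm : is_metric d.
Hypothesis Hcompact : mcompact_space d.
Hypothesis Hdiam : forall x y, d x y <= 1.

Lemma gX_inj_incl A B : Jbar d A -> Jbar d B -> gX d A = gX d B -> forall q, A q -> B q.
Proof.
  intros HA HB Heq [x t] Hq.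
  pose proof (Jbar_level X d A _ HA Hq) as Ht; simpl in Ht.
  destruct (Req_dec t 0) as [->|Ht0]; [apply (Jbar_base X d B); exact HB|].
  apply NNPP. intros HnB. pose proof HB as (_ & _ & _ & HBc & _ & _).
  destruct (dist_compact_pos X d Hm Hdiam B (x, t) HBc
              (fun q Hq => Jbar_level X d B q HB Hq) ltac:(simpl; lra)) as [r [Hr Hfar]].
  { intros [y s] Hy. pose proof (Jbar_level X d B _ HB Hy) as Hs; simpl in Hs.
    destruct (D_nonneg X d Hm (x, t) (y, s) ltac:(simpl; lra) ltac:(simpl; lra)) as [Hpos|H0];
      [exact Hpos|].
    destruct (D_eq0 X d Hm x t y s ltac:(lra) ltac:(lra) (eq_sym H0)) as [-> ->]. contradiction. }
  assert (Hrt : r <= t).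
  { specialize (Hfar (x, 0) (Jbar_base X d B x HB)). rewrite (D_to_base X d) in Hfar by lra. exact Hfar. }
  set (K := - ln (t - r / 2) / (r / 2)).
  assert (HK : K * (r / 2) = - ln (t - r / 2)) by (unfold K; field; lra).
  pose proof (ln_nonpos (t - r / 2) ltac:(lra)) as Hln.
  assert (HK0 : 0 <= K) by (unfold K; apply Rmult_le_pos; [lra | left; apply Rinv_0_lt_compat; lra]).
  pose proof (gX_bump_ge X d Hm Hcompact A x t K HA Hq ltac:(lra)) as Hge.
  pose proof (gX_bump_far X d Hm B x t r K HB ltac:(lra) ltac:(lra) HK0 ltac:(lra) Hfar) as Hle.
  pose proof (ln_increasing (t - r / 2) t ltac:(lra) ltac:(lra)).
  rewrite Heq in Hge. lra.
Qed.

Lemma gX_injective A B : Jbar d A -> Jbar d B -> gX d A = gX d B -> A = B.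
Proof.
  intros HA HB Heq. apply functional_extensionality. intros q.
  apply propositional_extensionality. split; apply gX_inj_incl; auto.
Qed.

End Injectivity.

(** ** Max-plus measures *)

Section MaxPlus.
Variable X : Type.
Variable d : X -> X -> R.
Hypothesis Hcompact : mcompact_space d.
Variable mu : Cfun d -> R.
Hypothesis Hmu : is_maxplus d mu.

Lemma mu_const c : mu (cconst X d c) = c.
Proof. destruct Hmu as [H _]. apply H. reflexivity. Qed.

Lemma mu_shift c f : mu (cshift X d c f) = c + mu f.
Proof. destruct Hmu as [_ [_ H]]. apply H. reflexivity. Qed.

Lemma mu_max f g : mu (cmax X d f g) = Rmax (mu f) (mu g).
Proof. destruct Hmu as [_ [H _]]. apply H. reflexivity. Qed.

Lemma mu_mono f g : (forall x, cval f x <= cval g x) -> mu f <= mu g.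
Proof.
  intros Hfg. destruct Hmu as [_ [Hmax _]].
  rewrite (Hmax f g g) by (intros x; rewrite Rmax_right; auto). apply Rmax_l.
Qed.

Lemma maxplus_list (l : list (Cfun d)) :
  exists chi, (forall psi, In psi l -> forall x, cval psi x - mu psi <= cval chi x) /\ mu chi <= 0.
Proof.
  induction l as [|psi l [chi [Hchi Hmu0]]].
  - exists (cconst X d 0). split; [intros _ []|]. rewrite mu_const. lra.
  - exists (cmax X d (cshift X d (- mu psi) psi) chi). split.
    + intros psi' [<-|Hin] x; unfold cmax, cshift, cval in *; simpl.
      * eapply Rle_trans; [|apply Rmax_l]. lra.
      * eapply Rle_trans; [|apply Rmax_r]. apply Hchi; assumption.
    + rewrite mu_max, mu_shift. apply Rmax_lub; lra.
Qed.

(** If at every point [g] is beaten by some normalised [psi - mu psi],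
    then [mu g < 0]: by compactness finitely many [psi] beat [g] with a
    uniform margin. *)
Lemma maxplus_cover_neg (g : Cfun d) :
  (forall x, exists psi, cval g x < cval psi x - mu psi) -> mu g < 0.
Proof.
  intros Hbeat.
  destruct (Hcompact (Cfun d * R)%type
              (fun p y => 0 < snd p /\ cval g y + snd p < cval (fst p) y - mu (fst p))) as [L HL].
  - intros [psi del] y [Hdel Hy]; simpl in *.
    destruct (open_lt_cfun X d (cshift X d del g) (cshift X d (- mu psi) psi) y) as [r [Hr Hball]].
    { unfold cshift, cval in *; simpl. lra. }
    exists r. split; [exact Hr|]. intros q Hq. specialize (Hball q Hq).
    unfold cshift, cval in *; simpl in *. split; lra.
  - intros y _. destruct (Hbeat y) as [psi Hpsi].
    exists (psi, (cval psi y - mu psi - cval g y) / 2). simpl. split; lra.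
  - destruct (maxplus_list (map fst L)) as [chi [Hchi Hchi0]].
    destruct (list_pos_lower_bound (fun p => 0 < snd p) snd L) as [m [Hm0 Hml]]; [auto|].
    assert (mu (cshift X d m g) <= mu chi); [|rewrite mu_shift in *; lra].
    apply mu_mono. intros y. destruct (HL y I) as [[psi del] [Hin [Hdel Hy]]]. simpl in *.
    specialize (Hml _ Hin Hdel). simpl in Hml.
    assert (In psi (map fst L)) by (apply in_map_iff; exists (psi, del); auto).
    specialize (Hchi psi H y). unfold cshift, cval in *; simpl. lra.
Qed.

End MaxPlus.

(** ** Surjectivity of [g_X]

    The preimage of [mu] is [A_mu = {(x,t) | t = 0 or phi x + ln t <= mu phi
    for all phi}], the largest set whose [g_X] is below [mu]. *)

Section Surjectivity.
Variable X : Type.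
Variable d : X -> X -> R.
Hypothesis Hm : is_metric d.
Hypothesis Hcompact : mcompact_space d.
Hypothesis Hdiam : forall x y, d x y <= 1.
Notation D := (cone_dist d).
Variable mu : Cfun d -> R.
Hypothesis Hmu : is_maxplus d mu.

Definition Amu (q : X * R) : Prop :=
  0 <= snd q <= 1 /\ (snd q = 0 \/ forall phi, cval phi (fst q) + ln (snd q) <= mu phi).

Lemma Amu_level1 : exists x, Amu (x, 1).
Proof.
  apply NNPP. intros Hno.
  assert (Hneg : mu (cconst X d 0) < 0).
  { apply (maxplus_cover_neg X d Hcompact mu Hmu). intros x.
    apply NNPP. intros Hx. apply Hno. exists x. split; [simpl; lra|]. right. intros phi.
    simpl. rewrite ln_1. apply Rnot_lt_le. intros Hlt. apply Hx. exists phi. simpl. lra. }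
  rewrite (mu_const X d mu Hmu) in Hneg. lra.
Qed.

(** [A_mu] is closed: a point [(x,t)] violating [phi x + ln t <= mu phi]
    keeps violating it on a cone neighbourhood ([log_shift]). *)
Lemma Amu_closed p : 0 <= snd p <= 1 -> ~ Amu p ->
  exists r, 0 < r /\ forall k, Amu k -> r <= D p k.
Proof.
  destruct p as [x t]. simpl. intros Ht Hn.
  assert (Ht0 : 0 < t) by (destruct (Req_dec t 0) as [->|]; [exfalso; apply Hn; split; simpl; auto | lra]).
  assert (Hphi : exists phi, mu phi < cval phi x + ln t).
  { apply NNPP. intros Hno. apply Hn. split; [exact Ht|]. right. intros phi.
    apply Rnot_lt_le. intros Hlt. apply Hno. eauto. }
  destruct Hphi as [phi Hphi]. set (gap := cval phi x + ln t - mu phi).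
  destruct (proj2_sig phi x (gap / 2)) as [del [Hdel Hcont]]; [unfold gap; lra|].
  exists (shift_radius t gap del). split; [apply shift_radius_pos; unfold gap; lra|].
  intros [y s] [Hs Hk]. simpl in Hs, Hk. apply Rnot_lt_le. intros Hnear.
  destruct (log_shift X d Hm (cval phi) x t y s t gap del ltac:(lra) ltac:(unfold gap; lra)
              Hdel ltac:(lra) Hcont Hnear) as [Hs0 Hval].
  destruct Hk as [Hk|Hk]; [lra|]. specialize (Hk phi). unfold gap in Hval. lra.
Qed.

Lemma Amu_Jbar : Jbar d Amu.
Proof.
  destruct Amu_level1 as [x1 Hx1].
  split; [|split; [|split; [|split; [|split]]]].
  - intros x t [H _]. exact H.
  - intros x y _. split; [simpl; lra | left; reflexivity].
  - exists (x1, 1). exact Hx1.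
  - apply (closed_cone_compact X d Hm Hcompact Hdiam); [intros q [H _]; exact H | exact Amu_closed].
  - intros x t t' [Ht Hk] Ht'. simpl in *. split; [simpl; lra|].
    destruct (Req_dec t' 0) as [->|Hn]; [left; reflexivity | right].
    destruct Hk as [Hk|Hk]; [simpl; lra|]. intros phi. specialize (Hk phi). simpl in *.
    pose proof (ln_mono t' t ltac:(lra) ltac:(lra)). lra.
  - exists x1. exact Hx1.
Qed.

(** Below a level [lam] exceeding [g_X(A_mu)(phi)], every point is beaten
    by a normalised [psi - mu psi]; otherwise the point [(x, e^(lam - phi x))]
    would belong to [A_mu]. *)
Lemma Amu_escape phi lam x : gX d Amu phi < lam ->
  exists psi, cval phi x - lam < cval psi x - mu psi.
Proof.
  intros Hlam. destruct (Rlt_le_dec (cval phi x) lam) as [Hlow|Hhigh].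
  - exists (cconst X d 0). rewrite (mu_const X d mu Hmu). simpl. lra.
  - set (t := exp (lam - cval phi x)).
    assert (Ht : 0 < t) by apply exp_pos.
    assert (Hln : ln t = lam - cval phi x) by apply ln_exp.
    assert (Ht1 : t <= 1).
    { rewrite <- exp_0. unfold t. destruct (Req_dec (lam - cval phi x) 0) as [->|Hne]; [lra|].
      left. apply exp_increasing. lra. }
    apply NNPP. intros Hno.
    assert (HA : Amu (x, t)).
    { split; [simpl; lra|]. right. simpl. intros psi.
      apply Rnot_lt_le. intros Hlt. apply Hno. exists psi. lra. }
    pose proof (gX_upper X d Hcompact Amu phi x t Amu_Jbar HA Ht). lra.
Qed.

Lemma gX_Amu : gX d Amu = mu.
Proof.
  apply functional_extensionality. intros phi. apply Rle_antisym.
  - apply gX_least; [exact Amu_Jbar|]. intros x t [_ [Hk|Hk]] Ht; simpl in *; [lra | apply Hk].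
  - apply Rnot_lt_le. intros Hlt.
    set (lam := (gX d Amu phi + mu phi) / 2).
    assert (Hneg : mu (cshift X d (- lam) phi) < 0).
    { apply (maxplus_cover_neg X d Hcompact mu Hmu). intros x.
      destruct (Amu_escape phi lam x ltac:(unfold lam; lra)) as [psi Hpsi].
      exists psi. unfold cshift, cval in *; simpl. lra. }
    rewrite (mu_shift X d mu Hmu) in Hneg. unfold lam in Hneg. lra.
Qed.

Lemma gX_surjective : exists A, Jbar d A /\ gX d A = mu.
Proof. exists Amu. split; [exact Amu_Jbar | exact gX_Amu]. Qed.

End Surjectivity.

(** ** Hausdorff distance on [Jbar]

    For [A, B] in [Jbar] all point-to-set distances lie in [[0, 1]], so the
    literal suprema and infima of Defs behave as expected. *)

Section Hausdorff.
Variable X : Type.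
Variable d : X -> X -> R.
Hypothesis Hm : is_metric d.
Notation D := (cone_dist d).

Lemma pt_set_dist_le A B a b : Jbar d A -> Jbar d B -> A a -> B b -> pt_set_dist D a B <= D a b.
Proof.
  intros HA HB Ha Hb. apply Rinf_lower; [|eauto].
  exists 0. intros z [b' [Hb' ->]].
  apply (D_nonneg X d Hm); [apply (Jbar_level X d A a HA Ha) | apply (Jbar_level X d B b' HB Hb')].
Qed.

Lemma pt_set_dist_ge B a c : Jbar d B -> (forall b, B b -> c <= D a b) -> c <= pt_set_dist D a B.
Proof.
  intros HB H. pose proof HB as (_ & _ & [b Hb] & _).
  apply Rinf_greatest; [intros z [b' [Hb' ->]]; auto | eauto].
Qed.

Lemma pt_set_dist_le1 A B a : Jbar d A -> Jbar d B -> A a -> pt_set_dist D a B <= 1.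
Proof.
  intros HA HB Ha. destruct a as [x t]. pose proof (Jbar_level X d A _ HA Ha) as Ht; simpl in Ht.
  eapply Rle_trans; [apply (pt_set_dist_le A B (x, t) (x, 0)); auto; apply (Jbar_base X d B x HB)|].
  rewrite (D_to_base X d) by lra. lra.
Qed.

Lemma hausdorff_lt_near A B rho : Jbar d A -> Jbar d B -> hausdorff D A B < rho ->
  (forall a, A a -> exists b, B b /\ D a b < rho) /\ (forall b, B b -> exists a, A a /\ D b a < rho).
Proof.
  intros HA HB Hh. unfold hausdorff in Hh.
  assert (Hside : forall A' B', Jbar d A' -> Jbar d B' ->
            Rsup (fun r => exists a, A' a /\ r = pt_set_dist D a B') < rho ->
            forall a, A' a -> exists b, B' b /\ D a b < rho).
  { intros A' B' HA' HB' Hs a Ha. apply NNPP. intros Hno.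
    assert (rho <= pt_set_dist D a B').
    { apply pt_set_dist_ge; [exact HB'|]. intros b Hb.
      apply Rnot_lt_le. intros Hlt. apply Hno. eauto. }
    assert (pt_set_dist D a B' <= Rsup (fun r => exists a, A' a /\ r = pt_set_dist D a B')); [|lra].
    apply Rsup_upper; [|eauto].
    exists 1. intros z [a' [Ha' ->]]. apply (pt_set_dist_le1 A'); assumption. }
  split; apply Hside; auto.
  - eapply Rle_lt_trans; [apply Rmax_l | exact Hh].
  - eapply Rle_lt_trans; [apply Rmax_r | exact Hh].
Qed.

Lemma hausdorff_le_of_near A B rho : Jbar d A -> Jbar d B -> 0 <= rho ->
  (forall a, A a -> exists b, B b /\ D a b <= rho) ->
  (forall b, B b -> exists a, A a /\ D b a <= rho) ->
  hausdorff D A B <= rho.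
Proof.
  intros HA HB Hr H1 H2. unfold hausdorff. apply Rmax_lub; apply Rsup_least_nonneg; auto.
  - intros z [a [Ha ->]]. destruct (H1 a Ha) as [b [Hb Hab]].
    pose proof (pt_set_dist_le A B a b HA HB Ha Hb). lra.
  - intros z [b [Hb ->]]. destruct (H2 b Hb) as [a [Ha Hab]].
    pose proof (pt_set_dist_le B A b a HB HA Hb Ha). lra.
Qed.

End Hausdorff.

(** ** Continuity of [g_X] *)

Section Continuity.
Variable X : Type.
Variable d : X -> X -> R.
Hypothesis Hm : is_metric d.
Hypothesis Hcompact : mcompact_space d.
Notation D := (cone_dist d).

(** Points of [A] of tiny level contribute nothing above [-|phi|_oo], and for
    the others [log_shift] applies with a uniform level bound. *)
Lemma gX_le_of_near (phi : Cfun d) r : 0 < r -> exists rho, 0 < rho /\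
  forall A B, Jbar d A -> Jbar d B -> (forall a, A a -> exists b, B b /\ D a b < rho) ->
    gX d A phi <= gX d B phi + r.
Proof.
  intros Hr. destruct (cfun_bounded X d Hcompact phi) as [M [HM HMx]].
  destruct (unif_cont X d Hm Hcompact (cval phi) (proj2_sig phi) (r / 2)) as [del [Hdel Hunif]];
    [lra|].
  set (s0 := exp (- (2 * M))).
  assert (Hs0 : 0 < s0) by apply exp_pos.
  exists (shift_radius s0 r del). split; [apply shift_radius_pos; assumption|].
  intros A B HA HB Hnear. apply (gX_least X d); [exact HA|]. intros x t Hx Ht.
  pose proof (Rabs_le_bounds _ _ (HMx x)) as Hphix.
  destruct (Rle_lt_dec t s0) as [Hsmall|Hbig].
  - pose proof HB as (_ & _ & _ & _ & _ & [y1 Hy1]).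
    pose proof (gX_upper X d Hcompact B phi y1 1 HB Hy1 ltac:(lra)) as HgB.
    rewrite ln_1 in HgB. pose proof (Rabs_le_bounds _ _ (HMx y1)).
    pose proof (ln_mono t s0 Ht Hsmall) as Hln. unfold s0 in Hln. rewrite ln_exp in Hln. lra.
  - destruct (Hnear (x, t) Hx) as [[y s] [Hy Hxy]].
    pose proof (Jbar_level X d B _ HB Hy) as Hs; simpl in Hs.
    destruct (log_shift X d Hm (cval phi) x t y s s0 r del ltac:(lra) Hr Hdel ltac:(lra)
                (fun z Hz => Hunif x z Hz) Hxy) as [Hs0' Hval].
    pose proof (gX_upper X d Hcompact B phi y s HB Hy Hs0'). lra.
Qed.

Lemma gX_continuous_at A (phi : Cfun d) r : Jbar d A -> 0 < r -> exists rho, 0 < rho /\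
  forall B, Jbar d B -> hausdorff D A B < rho -> Rabs (gX d B phi - gX d A phi) < r.
Proof.
  intros HA Hr. destruct (gX_le_of_near phi (r / 2)) as [rho [Hrho Hle]]; [lra|].
  exists rho. split; [exact Hrho|]. intros B HB Hh.
  destruct (hausdorff_lt_near X d Hm A B rho HA HB Hh) as [HAB HBA].
  pose proof (Hle A B HA HB HAB). pose proof (Hle B A HB HA HBA).
  apply Rabs_def1; lra.
Qed.

(** Continuity for finitely many test functions at once: the form needed
    for the basic open sets of [I(X)]. *)
Lemma gX_continuous A (l : list (Cfun d)) r : Jbar d A -> 0 < r -> exists rho, 0 < rho /\
  forall B, Jbar d B -> hausdorff D A B < rho ->
    forall phi, In phi l -> Rabs (gX d B phi - gX d A phi) < r.
Proof.
  intros HA Hr. induction l as [|phi l [rho [Hrho IH]]].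
  - exists 1. split; [lra | intros B _ _ phi []].
  - destruct (gX_continuous_at A phi r HA Hr) as [rho' [Hrho' Hphi]].
    exists (Rmin rho rho'). split; [apply Rmin_glb_lt; assumption|].
    intros B HB Hh psi [<-|Hin].
    + apply Hphi; [exact HB|]. pose proof (Rmin_r rho rho'). lra.
    + apply IH; [exact HB | | exact Hin]. pose proof (Rmin_l rho rho'). lra.
Qed.

End Continuity.

(** ** Openness of [g_X]

    Bumps centred at a finite net of [A] find
    points of [B] near every point of [A] ([near_point_of_bump]); bumps
    centred at a finite net of the compact set of points far from [A] exclude
    points of [B] there ([far_point_excluded]). *)

Lemma ln_ge_neg_ln_quarter e u : 0 < e -> e / 4 <= u -> - ln (4 / e) <= ln u.
Proof.
  intros He Hu. replace (4 / e) with (/ (e / 4)) by (field; lra).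
  rewrite ln_Rinv by lra. rewrite Ropp_involutive. apply ln_mono; lra.
Qed.

Section Openness.
Variable X : Type.
Variable d : X -> X -> R.
Hypothesis Hm : is_metric d.
Hypothesis Hcompact : mcompact_space d.
Hypothesis Hdiam : forall x y, d x y <= 1.
Notation D := (cone_dist d).

Lemma near_point_of_bump A B x t e K :
  Jbar d A -> Jbar d B -> A (x, t) -> 0 < e <= 1 -> 0 < K -> ln (4 / e) + 1 <= K * (e / 8) ->
  Rabs (gX d B (cbump X d Hm x K) - gX d A (cbump X d Hm x K)) < e / 16 ->
  exists b, B b /\ D (x, t) b <= e / 4.
Proof.
  intros HA HB Hx He HK HKe Hclose.
  pose proof (Jbar_level X d A _ HA Hx) as Ht; simpl in Ht.
  destruct (Rle_lt_dec t (e / 4)) as [Hlow|Hhigh].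
  - exists (x, 0). split; [apply (Jbar_base X d B x HB)|]. rewrite (D_to_base X d); lra.
  - apply Rabs_def2 in Hclose.
    pose proof (gX_bump_ge X d Hm Hcompact A x t K HA Hx ltac:(lra)) as HgA.
    destruct (gX_approx X d Hcompact B (cbump X d Hm x K) (ln t - e / 16) HB ltac:(lra))
      as [y [s [Hy [Hs Hval]]]].
    unfold cval in Hval; simpl in Hval.
    pose proof (Jbar_level X d B _ HB Hy) as Hs1; simpl in Hs1.
    pose proof (ln_nonpos s ltac:(lra)).
    pose proof (ln_ge_neg_ln_quarter e t ltac:(lra) ltac:(lra)).
    pose proof (d_nonneg X d Hm x y).
    assert (HKd : 0 <= K * d x y) by (apply Rmult_le_pos; lra).
    assert (Hxy : d x y < e / 8) by (apply Rmult_lt_reg_l with K; lra).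
    (* lower the found point of [B] to level [min s t], which stays in [B] *)
    pose proof HB as (_ & _ & _ & _ & HBsat & _).
    set (u := Rmin s t).
    assert (Hu : 0 <= u <= t) by (split; [apply Rmin_glb | apply Rmin_r]; lra).
    exists (y, u). split; [apply (HBsat y s u Hy); split; [lra | apply Rmin_l]|].
    rewrite (D_below X d) by lra.
    assert (Hgap : t - u <= e / 16).
    { unfold u. destruct (Rle_lt_dec t s) as [Hts|Hst].
      - rewrite Rmin_right by lra. lra.
      - rewrite Rmin_left by lra. pose proof (ln_sub_le s t Hs ltac:(lra)) as Hl.
        assert (Hq : (s - t) / t * t = s - t) by (field; lra). nra. }
    assert (u * d x y <= 1 * d x y) by (apply Rmult_le_compat_r; lra). lra.
Qed.

Lemma far_point_excluded A B y s b e K :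
  Jbar d A -> Jbar d B -> B b -> 0 < e <= 1 -> e / 2 <= s <= 1 ->
  (forall a, A a -> e / 2 <= D a (y, s)) -> 0 <= K -> ln (4 / e) <= K * (e / 4) ->
  D (y, s) b < shift_radius (e / 2) (e / 8) (e / (16 * (K + 1))) ->
  Rabs (gX d B (cbump X d Hm y K) - gX d A (cbump X d Hm y K)) < e / 16 -> False.
Proof.
  intros HA HB Hb He Hs Hfar HK HKe Hnear Hclose. apply Rabs_def2 in Hclose.
  pose proof (ln_ge_neg_ln_quarter e (s - e / 4) ltac:(lra) ltac:(lra)).
  assert (HgA : gX d A (cbump X d Hm y K) <= ln (s - e / 4)).
  { replace (s - e / 4) with (s - (e / 2) / 2) by field.
    apply (gX_bump_far X d Hm A y s (e / 2) K HA ltac:(lra) ltac:(lra) HK).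
    - replace (e / 2 / 2) with (e / 4) by field. lra.
    - intros a Ha. rewrite (D_sym X d Hm). apply Hfar, Ha. }
  destruct b as [y' s']. pose proof (Jbar_level X d B _ HB Hb) as Hs'; simpl in Hs'.
  assert (Hcont : forall z, d y z < e / (16 * (K + 1)) ->
            Rabs (cval (cbump X d Hm y K) y - cval (cbump X d Hm y K) z) < e / 8 / 2).
  { intros z Hz. unfold cval; simpl. rewrite (d_self X d Hm).
    pose proof (d_nonneg X d Hm y z).
    assert (Hq : e / (16 * (K + 1)) * (16 * (K + 1)) = e) by (field; lra).
    apply Rabs_def1; nra. }
  destruct (log_shift X d Hm (cval (cbump X d Hm y K)) y s y' s' (e / 2) (e / 8) (e / (16 * (K + 1)))
              ltac:(lra) ltac:(lra) ltac:(apply Rdiv_lt_0_compat; lra) ltac:(lra) Hcont Hnear)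
    as [Hs'0 Hval].
  pose proof (gX_upper X d Hcompact B (cbump X d Hm y K) y' s' HB Hb Hs'0).
  (* [ln] drops by at least [e/4] from [s] down to [s - e/4] *)
  pose proof (ln_sub_le (s - e / 4) s ltac:(lra) ltac:(lra)) as Hdrop.
  assert (Hq : (s - e / 4 - s) / s * s = - (e / 4)) by (field; lra).
  assert ((s - e / 4 - s) / s <= - (e / 4)) by nra.
  assert (Hcentre : cval (cbump X d Hm y K) y = 0) by (unfold cval; simpl; rewrite (d_self X d Hm); ring).
  lra.
Qed.

Lemma far_set_compact A e : Jbar d A ->
  mcompact_set D (fun q => 0 <= snd q <= 1 /\ forall a, A a -> e <= D a q).
Proof.
  intros HA. apply (closed_cone_compact X d Hm Hcompact Hdiam); [intros q [Hq _]; exact Hq|].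
  intros p Hp Hn.
  assert (Hex : exists a, A a /\ D a p < e).
  { apply NNPP. intros Hno. apply Hn. split; [exact Hp|]. intros a Ha.
    apply Rnot_lt_le. intros Hlt. apply Hno. eauto. }
  destruct Hex as [a [Ha Hap]]. exists (e - D a p). split; [lra|].
  intros k [Hk Hfar]. specialize (Hfar a Ha).
  pose proof (D_tri X d Hm Hdiam a p k (proj1 (Jbar_level X d A a HA Ha)) (proj1 Hp) (proj1 Hk)). lra.
Qed.

Lemma gX_open A eps : Jbar d A -> 0 < eps -> exists l r, 0 < r /\
  forall B, Jbar d B -> (forall phi, In phi l -> Rabs (gX d B phi - gX d A phi) < r) ->
    hausdorff D A B < eps.
Proof.
  intros HA Heps. pose proof HA as (_ & _ & _ & HAc & _ & _).
  set (e := Rmin eps 1).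
  assert (He : 0 < e <= 1) by (split; [apply Rmin_glb_lt | apply Rmin_r]; lra).
  assert (Hee : e <= eps) by apply Rmin_l.
  assert (HL : 0 <= ln (4 / e)).
  { pose proof (ln_ge_neg_ln_quarter e 1 ltac:(lra) ltac:(lra)). rewrite ln_1 in *. lra. }
  set (K1 := 8 * (ln (4 / e) + 1) / e).
  assert (HK1 : K1 * (e / 8) = ln (4 / e) + 1) by (unfold K1; field; lra).
  set (K2 := 4 * ln (4 / e) / e).
  assert (HK2 : K2 * (e / 4) = ln (4 / e)) by (unfold K2; field; lra).
  assert (HK1p : 0 < K1) by (unfold K1; apply Rdiv_lt_0_compat; lra).
  assert (HK2p : 0 <= K2) by (unfold K2; apply Rmult_le_pos; [lra | left; apply Rinv_0_lt_compat; lra]).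
  set (C := fun q : X * R => 0 <= snd q <= 1 /\ forall a, A a -> e / 2 <= D a q).
  set (rho := shift_radius (e / 2) (e / 8) (e / (16 * (K2 + 1)))).
  assert (Hrho : 0 < rho) by (apply shift_radius_pos; try apply Rdiv_lt_0_compat; lra).
  destruct (cone_net X d Hm Hdiam A (e / 4) HAc (fun q Hq => Jbar_level X d A q HA Hq) ltac:(lra))
    as [N [HN1 HN2]].
  destruct (cone_net X d Hm Hdiam C rho (far_set_compact A (e / 2) HA) (fun q Hq => proj1 Hq) Hrho)
    as [P [HP1 HP2]].
  exists (map (fun p => cbump X d Hm (fst p) K1) N ++ map (fun p => cbump X d Hm (fst p) K2) P), (e / 16).
  split; [lra|]. intros B HB Hclose.
  assert (hausdorff D A B <= e / 2); [|lra].
  apply (hausdorff_le_of_near X d Hm); [exact HA | exact HB | lra | |].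
  - intros a Ha. destruct (HN2 a Ha) as [[x t] [Hp Hpa]].
    destruct (near_point_of_bump A B x t e K1 HA HB (HN1 _ Hp) He HK1p ltac:(lra)) as [b [Hb Hpb]].
    { apply Hclose, in_or_app. left. apply in_map_iff. exists (x, t). auto. }
    exists b. split; [exact Hb|].
    pose proof (D_tri X d Hm Hdiam a (x, t) b (proj1 (Jbar_level X d A a HA Ha))
                  (proj1 (Jbar_level X d A _ HA (HN1 _ Hp))) (proj1 (Jbar_level X d B b HB Hb))).
    rewrite (D_sym X d Hm a (x, t)) in *. lra.
  - intros b Hb. apply NNPP. intros Hno.
    assert (HCb : C b).
    { split; [apply (Jbar_level X d B b HB Hb)|]. intros a Ha. rewrite (D_sym X d Hm).
      apply Rnot_lt_le. intros Hlt. apply Hno. exists a. split; [exact Ha | lra]. }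
    destruct (HP2 b HCb) as [[y s] [Hp Hpb]]. destruct (HP1 _ Hp) as [Hs HCp]; simpl in Hs.
    assert (Hse : e / 2 <= s).
    { specialize (HCp (y, 0) (Jbar_base X d A y HA)). rewrite (D_sym X d Hm), (D_to_base X d) in HCp by lra.
      exact HCp. }
    apply (far_point_excluded A B y s b e K2 HA HB Hb He ltac:(lra) HCp HK2p ltac:(lra) Hpb).
    apply Hclose, in_or_app. right. apply in_map_iff. exists (y, s). auto.
Qed.

End Openness.

Theorem mainTheorem12 (X : Type) (d : X -> X -> R)
  (Hmetric : is_metric d) (Hcompact : mcompact_space d)
  (Hdiam : forall x y, d x y <= 1) :
  (forall A, Jbar d A -> is_maxplus d (gX d A)) /\
  homeomorphism (Jbar d) (openJ d) (is_maxplus d) (openI d) (gX d).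
Proof.
  pose proof (gX_maxplus X d Hcompact) as Hmp.
  split; [exact Hmp|]. split; [|split; [|split; [|split]]].
  - exact Hmp.
  - exact (gX_injective X d Hmetric Hcompact Hdiam).
  - exact (gX_surjective X d Hmetric Hcompact Hdiam).
  - (* continuity: preimages of basic neighbourhoods contain Hausdorff balls *)
    intros V HV A HA HVA. destruct (HV (gX d A) (Hmp A HA) HVA) as [l [r [Hr Hnbhd]]].
    destruct (gX_continuous X d Hmetric Hcompact A l r HA Hr) as [rho [Hrho Hcont]].
    exists rho. split; [exact Hrho|]. intros B HB Hh.
    apply Hnbhd; [apply Hmp, HB | exact (Hcont B HB Hh)].
  - (* openness: images of Hausdorff balls contain basic neighbourhoods *)
    intros U HU mu Hmu [A [HA [HUA <-]]]. destruct (HU A HA HUA) as [eps [Heps Hball]].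
    destruct (gX_open X d Hmetric Hcompact Hdiam A eps HA Heps) as [l [r [Hr Hopen]]].
    exists l, r. split; [exact Hr|]. intros nu Hnu Hnear.
    destruct (gX_surjective X d Hmetric Hcompact Hdiam nu Hnu) as [B [HB <-]].
    exists B. split; [exact HB|]. split; [apply Hball; [exact HB | apply Hopen; assumption] | reflexivity].
Qed.
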